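(* Let $N$ be a finite set with $|N|\ge 3$. Then for every $a\in N$ the inequality $\sum_{B:\,\emptyset\neq B\subseteq N\setminus\{a\}}\eta(a|B)\le 1$ defines a facet of $P_N$.
   Context: $\mathrm{DAG}(N)$ is the set of acyclic directed graphs over $N$; $\mathrm{pa}_G(a)$ is the parent set of $a$ in $G$. $\Upsilon=\{(a|B): a\in N,\ \emptyset\neq B\subseteq N\setminus\{a\}\}$; $\eta_G\in\mathbb{R}^{\Upsilon}$ has $\eta_G(a|B)=1$ if $B=\mathrm{pa}_G(a)$, else $0$; $P_N=\mathrm{conv}\{\eta_G:G\in\mathrm{DAG}(N)\}$ is the family-variable polytope. *)

From HB Require Import structures.
From mathcomp Require Import all_boot all_order all_algebra.
From mathcomp Require Import reals.
Set Implicit Arguments. Unset Strict Implicit. Unset Printing Implicit Defensive.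
Import Order.TTheory GRing.Theory Num.Theory.
Local Open Scope ring_scope.

Section FamilyVariable.
Variable N : finType.

Definition upsilon_pred (p : N * {set N}) : bool := (p.2 != set0) && (p.1 \notin p.2).
Definition Upsilon : finType := {p : N * {set N} | upsilon_pred p}.

(* A directed graph over N, given by its parent sets: b -> a is an edge iff
   b \in pa a. *)
Definition digraph := {ffun N -> {set N}}.
Definition edge (G : digraph) : rel N := fun b a => b \in G a.

(* Acyclic: there is no directed cycle (a nonempty closed directed path);
   this also excludes loops. *)
Definition acyclic (G : digraph) : Prop :=
  forall (x : N) (p : seq N), path (edge G) x p -> last x p = x -> p = [::].

End FamilyVariable.

Section Polytope.
Variable R : realType.
Variable N : finType.

Definition vec := Upsilon N -> R.

Definition eta (G : digraph N) : vec :=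
  fun u => if (val u).2 == G (val u).1 then 1 else 0.

Definition conv (S : vec -> Prop) : vec -> Prop :=
  fun x => exists (k : nat) (p : 'I_k -> vec) (w : 'I_k -> R),
    [/\ forall i, S (p i), forall i, 0 <= w i, \sum_(i < k) w i = 1 &
        forall u, x u = \sum_(i < k) w i * p i u].

Definition PN : vec -> Prop :=
  conv (fun x => exists G : digraph N, acyclic G /\ x = eta G).

Definition lin_indep (k : nat) (v : 'I_k -> vec) : Prop :=
  forall lam : 'I_k -> R,
    (forall u, \sum_(i < k) lam i * v i u = 0) -> forall i, lam i = 0.

Definition aff_indep (k : nat) (p : 'I_k.+1 -> vec) : Prop :=
  lin_indep (fun i : 'I_k => fun u => p (lift ord0 i) u - p ord0 u).

Definition has_affdim (S : vec -> Prop) (d : nat) : Prop :=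
  (exists p : 'I_d.+1 -> vec, (forall i, S (p i)) /\ aff_indep p) /\
  (forall p : 'I_d.+2 -> vec, (forall i, S (p i)) -> ~ aff_indep p).

Definition dot (c x : vec) : R := \sum_u c u * x u.

Definition is_facet (P : vec -> Prop) (c : vec) (b : R) : Prop :=
  (forall x, P x -> dot c x <= b) /\
  exists d : nat, has_affdim P d.+1 /\ has_affdim (fun x => P x /\ dot c x = b) d.

Definition coef_a (a : N) : vec := fun u => if (val u).1 == a then 1 else 0.

End Polytope.

(* P_N is full-dimensional and the face {x in P_N | sum_B x(a|B) = 1} has
   dimension |Upsilon| - 1; both lower bounds come from one family of
   acyclic graphs G_u, one per index u = (x|B): the only families of G_u are
   x with parents B and, when x <> a, a with a single parent d outside
   {a, x} (here |N| >= 3 is used).  Each G_u has a nonempty family at a, so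
   eta_{G_u} lies on the face, and eta_{G_u} = e_u + [x <> a] e_(a|{d}) is
   unitriangular once the indices with head a are ranked above the others,
   hence linearly independent.  Together with eta of the empty graph (the
   origin) this gives |Upsilon| + 1 affinely independent points of P_N.  The
   upper bounds are dimension counts in R^Upsilon: no |Upsilon| + 1 vectors
   are independent, and differences of points on the face are orthogonal to
   the nonzero normal vector, so they can be extended by it. *)
From Pilot Require Import Defs.
From mathcomp Require Import all_boot all_order all_algebra.
From mathcomp Require Import reals.
From mathcomp Require Import zify.
Import Order.TTheory GRing.Theory Num.Theory.
Local Open Scope ring_scope.

Section LinearAlgebra.
Context {R : realType} {N : finType}.
Local Notation U := (Upsilon N).
Local Notation vec := (@vec R N).

Definition lin_indepU (F : U -> vec) : Prop :=
  forall mu : U -> R, (forall v, \sum_u mu u * F u v = 0) -> forall u, mu u = 0.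

Lemma sum_mul_delta (mu : U -> R) (v : U) :
  \sum_u mu u * (u == v)%:R = mu v.
Proof.
rewrite (bigD1 v) //= eqxx mulr1 big1 ?addr0 // => u /negbTE->.
by rewrite mulr0.
Qed.

Lemma lin_indepU_unitriangular {F : U -> vec} (r : U -> nat) :
  (forall u v, (r v <= r u)%N -> F u v = (u == v)%:R) -> lin_indepU F.
Proof.
move=> Ftri mu hmu u; move: {2}(r u) (erefl (r u)) => n.
elim/ltn_ind: n u => n IH v rv; rewrite -(sum_mul_delta mu v) -[RHS](hmu v).
apply: eq_bigr => u _; case: (leqP (r v) (r u)) => [/Ftri-> // | ltuv].
by rewrite (IH (r u)) ?mul0r // -rv.
Qed.

Lemma lin_indep_leq_card {k : nat} {v : 'I_k -> vec} :
  lin_indep v -> (k <= #|U|)%N.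
Proof.
move=> vfree; rewrite leqNgt; apply/negP => ltUk.
pose A : 'M[R]_(k, #|U|) := \matrix_(i, j) v i (enum_val j).
have : kermx A != 0.
  by rewrite kermx_eq0 -row_leq_rank -ltnNge (leq_ltn_trans (rank_leq_col A)).
case/eqP; apply/matrixP => r i; rewrite [RHS]mxE.
apply: (vfree (fun i => kermx A r i)) => u.
have := congr1 (fun M : 'M_(k, #|U|) => M r (enum_rank u)) (mulmx_ker A).
rewrite /= !mxE => e; rewrite -[RHS]e; apply: eq_bigr => j _.
by rewrite [A _ _]mxE enum_rankK.
Qed.

Lemma eq_lin_indep {k : nat} {v w : 'I_k -> vec} :
  (forall i u, v i u = w i u) -> lin_indep v -> lin_indep w.
Proof.
move=> evw vfree lam H; apply: vfree => u; rewrite -[RHS](H u).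
by apply: eq_bigr => i _; rewrite evw.
Qed.

Lemma lin_indep_enum {k : nat} (eUk : #|U| = k) {F : U -> vec} :
  lin_indepU F -> lin_indep (fun i : 'I_k => F (enum_val (cast_ord (esym eUk) i))).
Proof.
move=> Ffree lam H.
pose h u := cast_ord eUk (enum_rank u).
have hK i : h (enum_val (cast_ord (esym eUk) i)) = i.
  by rewrite /h enum_valK cast_ordKV.
have h_bij : bijective h.
  by exists (fun i => enum_val (cast_ord (esym eUk) i)) => // u;
     rewrite /h cast_ordK enum_rankK.
suff lam_h u : lam (h u) = 0 by move=> i; rewrite -(hK i) lam_h.
apply: (Ffree (fun u => lam (h u))) => v.
rewrite -[RHS](H v) (reindex h) /=; last exact: onW_bij.
by apply: eq_bigr => w _; rewrite /h cast_ordK enum_rankK.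
Qed.

Lemma lin_indep_aff_indep {k : nat} {p : 'I_k.+1 -> vec} :
  lin_indep p -> aff_indep p.
Proof.
move=> pfree lam H i.
pose lam' j := if unlift ord0 j is Some j' then lam j' else - \sum_(l < k) lam l.
have lam'_lift j : lam' (lift ord0 j) = lam j by rewrite /lam' liftK.
rewrite -lam'_lift; apply: pfree => u.
rewrite big_ord_recl /lam' unlift_none -[RHS](H u) mulNr mulr_suml addrC -sumrB.
by apply: eq_bigr => j _; rewrite liftK mulrBr.
Qed.

Lemma dot_sum (c : vec) (k : nat) (lam : 'I_k -> R) (v : 'I_k -> vec) :
  dot c (fun u => \sum_(i < k) lam i * v i u) = \sum_(i < k) lam i * dot c (v i).
Proof.
rewrite /dot; under eq_bigr => u _ do rewrite mulr_sumr.
rewrite exchange_big /=; apply: eq_bigr => i _; rewrite mulr_sumr.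
by apply: eq_bigr => u _; rewrite mulrCA.
Qed.

Lemma dotB (c x y : vec) : dot c (fun u => x u - y u) = dot c x - dot c y.
Proof. by rewrite /dot -sumrB; apply: eq_bigr => u _; rewrite mulrBr. Qed.

Lemma dot_self_gt0 {c : vec} {u0 : U} : c u0 != 0 -> 0 < dot c c.
Proof.
move=> cu0; rewrite /dot (bigD1 u0) //= -expr2 ltr_pwDl ?exprn_even_gt0 //.
by apply: sumr_ge0 => u _; rewrite -expr2 sqr_ge0.
Qed.

Lemma lin_indep_orthogonal_cons {c : vec} {k : nat} {v : 'I_k -> vec} :
  0 < dot c c -> (forall i, dot c (v i) = 0) -> lin_indep v ->
  lin_indep (fun i : 'I_k.+1 => if unlift ord0 i is Some j then v j else c).
Proof.
move=> cc_gt0 cv vfree lam H.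
have lam0 : lam ord0 = 0.
  have : dot c (fun u => \sum_(i < k.+1) lam i *
                  (if unlift ord0 i is Some j then v j else c) u) = 0.
    by rewrite /dot big1 // => u _; rewrite H mulr0.
  rewrite dot_sum big_ord_recl unlift_none big1 => [|j _]; last first.
    by rewrite liftK cv mulr0.
  by rewrite addr0 => /eqP; rewrite mulf_eq0 (gt_eqF cc_gt0) orbF => /eqP.
have lam_lift : forall j, lam (lift ord0 j) = 0.
  apply: vfree => u; rewrite -[RHS](H u) big_ord_recl unlift_none lam0 mul0r add0r.
  by apply: eq_bigr => j _; rewrite liftK.
by move=> i; case: (unliftP ord0 i) => [j ->|->].
Qed.

Lemma aff_indep_hyperplane_lt_card {c : vec} {b : R} {u0 : U} {k : nat}
    {p : 'I_k.+1 -> vec} :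
  c u0 != 0 -> (forall i, dot c (p i) = b) -> aff_indep p -> (k < #|U|)%N.
Proof.
move=> cu0 pc pfree.
have diff_c j : dot c (fun u => p (lift ord0 j) u - p ord0 u) = 0.
  by rewrite dotB !pc subrr.
exact: lin_indep_leq_card (lin_indep_orthogonal_cons (dot_self_gt0 cu0) diff_c pfree).
Qed.

Lemma has_affdim_full {S : vec -> Prop} {x0 : vec} {F : U -> vec} :
  S x0 -> (forall u, S (F u)) -> lin_indepU (fun u v => F u v - x0 v) ->
  has_affdim S #|U|.
Proof.
move=> Sx0 SF Ffree; split; last first.
  by move=> p _ /lin_indep_leq_card; rewrite ltnn.
exists (fun i => if unlift ord0 i is Some j then F (enum_val j) else x0); split.
  by move=> i; case: (unlift ord0 i).
rewrite /aff_indep; apply: eq_lin_indep (lin_indep_enum (erefl #|U|) Ffree) => i u.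
by rewrite liftK unlift_none cast_ord_id.
Qed.

Lemma has_affdim_hyperplane {S : vec -> Prop} {c : vec} {b : R} {u0 : U}
    {F : U -> vec} :
  c u0 != 0 -> (forall x, S x -> dot c x = b) ->
  (forall u, S (F u)) -> lin_indepU F -> has_affdim S #|U|.-1.
Proof.
move=> cu0 Sc SF Ffree.
have eU : #|U| = #|U|.-1.+1 by rewrite prednK //; apply/card_gt0P; exists u0.
split.
  exists (fun i => F (enum_val (cast_ord (esym eU) i))); split => //.
  exact/lin_indep_aff_indep/lin_indep_enum.
move=> p Sp /(aff_indep_hyperplane_lt_card cu0 (fun i => Sc _ (Sp i))).
by rewrite -eU ltnn.
Qed.

Lemma conv_mem {S : vec -> Prop} {x : vec} : S x -> conv S x.
Proof.
move=> Sx; exists 1%N, (fun _ => x), (fun _ => 1).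
by split=> [//|_|| u]; rewrite ?ler01 // big_ord1 ?mul1r.
Qed.

Lemma conv_dot_le {S : vec -> Prop} {c : vec} {b : R} :
  (forall s, S s -> dot c s <= b) -> forall x, conv S x -> dot c x <= b.
Proof.
move=> Sb x [k [p [w [Sp w_ge0 w1 xE]]]].
have -> : dot c x = \sum_(i < k) w i * dot c (p i).
  by rewrite -dot_sum; apply: eq_bigr => u _; rewrite xE.
rewrite -[b]mul1r -w1 mulr_suml.
by apply: ler_sum => i _; rewrite ler_wpM2l ?Sb.
Qed.

End LinearAlgebra.

Section Graphs.
Context {N : finType}.
Local Notation U := (Upsilon N).

Lemma rank_acyclic (G : digraph N) (r : N -> nat) :
  (forall b c, b \in G c -> (r b < r c)%N) -> acyclic G.
Proof.
move=> r_edge.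
have r_path p x : path (edge G) x p -> p != [::] -> (r x < r (last x p))%N.
  elim: p x => [|y p IH] x //= /andP[/r_edge rxy yp] _.
  by case: p IH yp => [|z p] // IH yp; apply: ltn_trans rxy (IH y yp _).
move=> x p xp xpx; apply/eqP; apply: contraT => /(r_path p x xp).
by rewrite xpx ltnn.
Qed.

Lemma Upsilon_eqE (u v : U) :
  (u == v) = ((val u).1 == (val v).1) && ((val u).2 == (val v).2).
Proof. by rewrite -val_eqE; case: (val u) (val v) => [? ?] [? ?]. Qed.

Lemma Upsilon_notin (u : U) : (val u).1 \notin (val u).2.
Proof. by case/andP: (valP u). Qed.

Definition empty_graph : digraph N := [ffun _ => set0].

Lemma empty_graph_acyclic : acyclic empty_graph.
Proof. by apply: (@rank_acyclic _ (fun _ => 0%N)) => b c; rewrite ffunE inE. Qed.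

Variable a : N.
Hypothesis card_N : (3 <= #|N|)%N.

Definition third_vertex (c : N) : N := odflt a [pick d | (d != a) && (d != c)].

Lemma third_vertexP (c : N) : (third_vertex c != a) && (third_vertex c != c).
Proof.
rewrite /third_vertex; case: pickP => [d -> // | none].
have : (#|[set: N]| <= #|[set a; c]|)%N.
  apply/subset_leq_card/subsetP => x _; rewrite !inE.
  by move: (none x); case: (x == a); case: (x == c).
by rewrite cardsT cards2; move: card_N; case: (a != c) => /=; lia.
Qed.

Definition face_graph (u : U) : digraph N :=
  [ffun x => if x == (val u).1 then (val u).2
             else if x == a then [set third_vertex (val u).1] else set0].

Lemma face_graph_acyclic (u : U) : acyclic (face_graph u).
Proof.
apply: (@rank_acyclic _ (fun x => if x == (val u).1 then 2%N
  else if x == a then 1%N else 0%N)) => b c; rewrite ffunE.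
case: ifP => [_ bu | _].
  by move: (Upsilon_notin u); case: eqP bu => [->->|] //; case: (b == a).
case: ifP => [_|]; last by rewrite inE.
rewrite inE => /eqP->.
by case/andP: (third_vertexP (val u).1) => /negbTE-> /negbTE->.
Qed.

Lemma single_parent_family (x : N) : upsilon_pred (a, [set third_vertex x]).
Proof.
case/andP: (third_vertexP x) => ta _.
rewrite /upsilon_pred in_set1 (eq_sym a) ta andbT.
by apply/set0Pn; exists (third_vertex x); rewrite set11.
Qed.

Lemma exists_head_a : exists u : U, (val u).1 = a.
Proof. by exists (exist (@upsilon_pred N) _ (single_parent_family a)). Qed.

Lemma face_graph_family_a (u : U) : upsilon_pred (a, face_graph u a).
Proof.
rewrite ffunE eqxx; case: (eqVneq a (val u).1) => [-> | _]; first exact: (valP u).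
exact: single_parent_family.
Qed.

End Graphs.

Section FamilyVectors.
Context {R : realType} {N : finType}.
Local Notation U := (Upsilon N).

Lemma sum_val_eq (x : N * {set N}) :
  \sum_(v : U) ((val v == x)%:R : R) = (upsilon_pred x)%:R.
Proof.
case: (boolP (upsilon_pred x)) => [ux | nux]; last first.
  apply: big1 => v _; case: eqP => // vx.
  by move: (valP v); rewrite vx (negbTE nux).
rewrite (bigD1 (exist _ x ux)) //= eqxx big1 ?addr0 // => v vx.
by rewrite -[x]/(val (exist _ x ux : U)) val_eqE (negbTE vx).
Qed.

Lemma dot_coef_a_eta (a : N) (G : digraph N) :
  dot (coef_a R a) (Defs.eta R G) = (upsilon_pred (a, G a))%:R.
Proof.
rewrite /dot -sum_val_eq; apply: eq_bigr => v _.
rewrite /coef_a /Defs.eta; case: (val v) => x B /=.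
rewrite xpair_eqE; case: (eqVneq x a) => [-> | xa] /=; last by rewrite mul0r.
by rewrite mul1r; case: (_ == _).
Qed.

Lemma eta_empty_graph (v : U) : Defs.eta R (@empty_graph N) v = 0.
Proof. by rewrite /Defs.eta ffunE; case/andP: (valP v) => /negbTE->. Qed.

Lemma eta_face_graph (a : N) (u v : U) :
  (((val v).1 == a) <= ((val u).1 == a))%N ->
  Defs.eta R (face_graph a u) v = (u == v)%:R.
Proof.
move=> headv; rewrite /Defs.eta ffunE Upsilon_eqE (eq_sym (val u).1).
have [vu | vu] /= := eqVneq (val v).1 (val u).1.
  by rewrite eq_sym; case: (_ == _).
have va : (val v).1 != a.
  apply: contra vu => /eqP va; move: headv.
  by rewrite va eqxx eq_sym; case: (_ == _).
by rewrite (negbTE va); case/andP: (valP v) => /negbTE->.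
Qed.

End FamilyVectors.

Theorem lemma3 (R : realType) (N : finType) (hN : (3 <= #|N|)%N) (a : N) :
  is_facet (@PN R N) (@coef_a R N a) 1.
Proof.
set U := Upsilon N; set c := coef_a R a.
pose F u := Defs.eta R (face_graph a u).
pose head_a (u : U) : nat := (val u).1 == a.
have F_PN u : PN (F u) by apply/conv_mem; exists (face_graph a u); split;
  [exact: face_graph_acyclic|].
have F_face u : dot c (F u) = 1 by rewrite dot_coef_a_eta face_graph_family_a.
have F_free : lin_indepU F.
  by apply: (lin_indepU_unitriangular head_a) => u v; apply: eta_face_graph.
have [u0 cu0] : exists u0 : U, c u0 != 0.
  have [u0 u0a] := exists_head_a a hN.
  by exists u0; rewrite /c /coef_a u0a eqxx oner_neq0.
split.
  apply: conv_dot_le => _ [G [_ ->]].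
  by rewrite dot_coef_a_eta; case: upsilon_pred; rewrite ?ler01.
exists #|U|.-1; rewrite prednK; last by apply/card_gt0P; exists u0.
split.
  apply: (has_affdim_full (x0 := Defs.eta R (@empty_graph N)) (F := F)) => //.
    by apply/conv_mem; exists empty_graph; split; [exact: empty_graph_acyclic|].
  apply: (lin_indepU_unitriangular head_a) => u v headv.
  by rewrite eta_empty_graph subr0 /F eta_face_graph.
apply: (has_affdim_hyperplane (b := 1) cu0 _ _ F_free) => [x [_ ->] // | u].
exact: conj (F_PN u) (F_face u).
Qed.
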